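(* Let $\kappa$ be an uncountable cardinal and let $(G_\alpha:\alpha<\kappa)$ be topological groups, each with more than one element. If ${\sf KH}(\kappa,\aleph_1)$ holds, then $\prod_{\alpha<\kappa}G_\alpha$ (with the product topology) has a Rothberger bounded subset, indeed a Rothberger bounded subgroup, of cardinality $\kappa^+$.
   Context: All topological groups are assumed Tychonoff. A subset $X$ of a topological group $(G,* )$ is Rothberger bounded if for every sequence $(U_n:n<\omega)$ of open neighborhoods of the identity there are $g_n\in G$ with $X\subseteq\bigcup_n g_n*U_n$. For uncountable cardinals $\lambda\le\kappa$, a $(\kappa,\lambda)$ Kurepa family is a family $\mathcal F$ of subsets of $\kappa$ with $|\mathcal F|>\kappa$ such that for every infinite $A\subseteq\kappa$ with $|A|<\lambda$, $|\{X\cap A:X\in\mathcal F\}|\le|A|$. ${\sf KH}(\kappa,\lambda)$ is the statement that a $(\kappa,\lambda)$ Kurepa family exists. *)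

From HB Require Import structures.
From mathcomp Require Import all_boot all_order all_algebra.
From mathcomp Require Import all_classical all_reals all_analysis.
From mathcomp Require Import Rstruct Rstruct_topology.
From Stdlib Require Import Rdefinitions.

Set Implicit Arguments.
Unset Strict Implicit.
Unset Printing Implicit Defensive.

Local Open Scope classical_set_scope.

Definition completely_regular (T : topologicalType) : Prop :=
  forall (C : set T) (x : T), closed C -> ~ C x ->
    exists f : T -> Rdefinitions.R,
      continuous f /\ f x = 0%R /\ (forall y, C y -> f y = 1%R).

Definition tychonoff_space (T : topologicalType) : Prop :=
  accessible_space T /\ completely_regular T.

Record topGroup (T : topologicalType) := TopGroup {
  tg_mul : T -> T -> T;
  tg_inv : T -> T;
  tg_one : T;
  tg_mulA : forall x y z, tg_mul x (tg_mul y z) = tg_mul (tg_mul x y) z;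
  tg_mul1g : forall x, tg_mul tg_one x = x;
  tg_mulg1 : forall x, tg_mul x tg_one = x;
  tg_mulVg : forall x, tg_mul (tg_inv x) x = tg_one;
  tg_mulgV : forall x, tg_mul x (tg_inv x) = tg_one;
  tg_mul_cont : continuous (fun p : T * T => tg_mul p.1 p.2);
  tg_inv_cont : continuous tg_inv;
  tg_tychonoff : tychonoff_space T
}.

Definition prod_mul (K : Type) (G : K -> topologicalType)
  (tg : forall a, topGroup (G a)) (f g : prod_topology G) : prod_topology G :=
  fun a => tg_mul (tg a) (f a) (g a).
Definition prod_inv (K : Type) (G : K -> topologicalType)
  (tg : forall a, topGroup (G a)) (f : prod_topology G) : prod_topology G :=
  fun a => tg_inv (tg a) (f a).
Definition prod_one (K : Type) (G : K -> topologicalType)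
  (tg : forall a, topGroup (G a)) : prod_topology G :=
  fun a => tg_one (tg a).

Definition prod_is_subgroup (K : Type) (G : K -> topologicalType)
  (tg : forall a, topGroup (G a)) (S : set (prod_topology G)) : Prop :=
  S (prod_one tg) /\
  (forall x y, S x -> S y -> S (prod_mul tg x y)) /\
  (forall x, S x -> S (prod_inv tg x)).

Definition prod_rothberger_bounded (K : Type) (G : K -> topologicalType)
  (tg : forall a, topGroup (G a)) (X : set (prod_topology G)) : Prop :=
  forall U : nat -> set (prod_topology G),
    (forall n, open (U n) /\ U n (prod_one tg)) ->
    exists g : nat -> prod_topology G,
      X `<=` \bigcup_n [set prod_mul tg (g n) u | u in U n].

(* (kappa, lambda) Kurepa family with lambda = aleph_1, kappa represented by
   a type K: F a family of subsets of K with |F| > |K| such that for every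
   infinite A with |A| < aleph_1 (i.e. countable), |{X cap A : X in F}| <= |A|. *)
Definition KH_aleph1 (K : Type) : Prop :=
  exists F : set (set K),
    ~ (card_le F [set: K]) /\
    forall A : set K, infinite_set A -> countable A ->
      card_le [set X `&` A | X in F] A.

Definition has_card_succ (K : Type) (U : Type) (S : set U) : Prop :=
  ~ (card_le S [set: K]) /\
  forall T : set U, T `<=` S -> ~ (card_le T [set: K]) -> card_le S T.

From mathcomp Require Import all_boot all_order all_algebra.
From mathcomp Require Import all_classical all_reals all_analysis.
From mathcomp Require Import wochoice.
From Stdlib Require List.

(* Fix [a_k <> 1] in every [G k]; for [X ⊆ K] the letter [e_X] is the point
   equal to [a] on [X] and to [1] off [X].  Choose a subfamily [F'] of the
   Kurepa family of size exactly [|K|^+] and let [S] be the subgroup generated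
   by the [e_X], [X ∈ F']; [S] has the size of [F'].  Every neighbourhood of
   [1] in the product contains all points equal to [1] on some countable set
   of coordinates.  Given [(U_n)], gather these coordinates into a countable
   [A].  The value of a word on [A] depends only on the traces [X ∩ A] of its
   letters, and by the Kurepa property there are only countably many traced
   words; enumerate them as [(w_n)].  Each [s ∈ S] agrees on [A] with the
   [w_n] of its own trace, so [s ∈ w_n U_n]. *)

Set Implicit Arguments.
Unset Strict Implicit.
Unset Printing Implicit Defensive.
Local Open Scope classical_set_scope.

(** * Comparing cardinalities by explicit injections *)

(* [card_le] with the injection exposed; the disjunct [A = set0] covers an
   empty type [U], where no function [T -> U] need exist. *)
Definition injects T U (A : set T) (B : set U) := A = set0 \/
  exists f : T -> U, (forall x, A x -> B (f x)) /\
     (forall x y, A x -> A y -> f x = f y -> x = y).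

Lemma injects_card_le T U (A : set T) (B : set U) : card_le A B <-> injects A B.
Proof.
elim/Ppointed: U => U in B *.
  have -> : B = set0 by apply/seteqP; split=> x // _; exact: (no x).
  split; first by move/card_le0P => ->; left.
  case=> [->|[f [fB _]]]; first exact: card_ge0.
  by apply/card_le0P/seteqP; split=> x // /fB.
split.
  move/pcard_leP=> /injfunPex [f fB finj]; right; exists f; split=> //.
  by move=> x y Ax Ay; apply: finj; rewrite inE.
case=> [->|[f [fB finj]]]; first exact: card_ge0.
apply/pcard_leP/injfunPex; exists f => //.
by move=> x y; rewrite !inE => Ax Ay; apply: finj.
Qed.

Lemma injects_refl T (A : set T) : injects A A.
Proof. by right; exists id. Qed.

Lemma injects_trans T U V (A : set T) (B : set U) (C : set V) :
  injects A B -> injects B C -> injects A C.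
Proof.
move=> /injects_card_le AB /injects_card_le BC; apply/injects_card_le.
exact: card_le_trans AB BC.
Qed.

Lemma injects_sub T (A B : set T) : A `<=` B -> injects A B.
Proof. by move=> AB; right; exists id; split=> // x /AB. Qed.

Lemma injects_image T U (f : T -> U) (A : set T) : injects (f @` A) A.
Proof. exact/injects_card_le/card_image_le. Qed.

Lemma injects_setX T1 T2 U1 U2 (A1 : set T1) (A2 : set T2)
    (B1 : set U1) (B2 : set U2) :
  injects A1 B1 -> injects A2 B2 -> injects (A1 `*` A2) (B1 `*` B2).
Proof.
case=> [->|[f [fB fi]]]; first by left; apply/seteqP; split=> -[] // ? ? [].
case=> [->|[g [gB gi]]]; first by left; apply/seteqP; split=> -[] // ? ? [].
right; exists (fun p => (f p.1, g p.2)); split.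
  by move=> [x y] [/= Ax Ay]; split; [apply: fB|apply: gB].
move=> [x y] [x' y'] [/= Ax Ay] [/= Ax' Ay'] [] /fi -> // /gi -> //.
Qed.

Lemma infinite_injects T (A : set T) : infinite_set A <-> injects [set: nat] A.
Proof. by rewrite infiniteP injects_card_le. Qed.

Lemma finite_injects T U (A : set T) (B : set U) :
  infinite_set B -> finite_set A -> injects A B.
Proof.
move=> /infinite_injects Binf /finite_set_countable /injects_card_le Acount.
exact: injects_trans Acount Binf.
Qed.

Lemma injects_fun T U (A : set T) (B : set U) (u : U) : injects A B ->
  exists f : T -> U, (forall x, A x -> B (f x)) /\
     (forall x y, A x -> A y -> f x = f y -> x = y).
Proof. by case=> [->|//]; exists (fun _ => u). Qed.

Lemma injects_bij T U (A : set T) (B : set U) (u0 : U) :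
  injects A B -> injects B A ->
  exists k : T -> U, (forall x, A x -> B (k x)) /\
    (forall x y, A x -> A y -> k x = k y -> x = y) /\
    (forall y, B y -> exists2 x, A x & k x = y).
Proof.
move=> /injects_card_le AB /injects_card_le BA.
have := Cantor_Bernstein AB BA.
elim/Ppointed: U => U in B u0 AB BA *; first by case: (no u0).
move=> /card_set_bijP [k [kf ki ks]]; exists k; split => //; split.
  by move=> x y Ax Ay; apply: ki; rewrite inE.
by move=> y /ks [x Ax <-]; exists x.
Qed.

Lemma graph_injects T U (A : set T) (B : set U) (G : set (T * U)) :
  G `<=` A `*` B ->
  (forall p q, G p -> G q -> p.2 = q.2 -> p = q) ->
  (forall x, A x -> exists y, G (x, y)) -> injects A B.
Proof.
move=> GAB Ginj Gtot.
have [->|/set0P [a0 Aa0]] := eqVneq A set0; first by left.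
have [b0 _] := Gtot a0 Aa0.
have /choice [f Gf] : forall x, exists y, A x -> G (x, y).
  move=> x; have [/Gtot [y Gy]|nAx] := pselect (A x).
    by exists y.
  by exists b0.
right; exists f; split; first by move=> x /Gf /GAB [].
move=> x y Ax Ay fxy.
by case: (Ginj _ _ (Gf x Ax) (Gf y Ay) fxy).
Qed.

(* Zorn's lemma on graphs of partial bijections between [A] and [B]: a
   maximal one is total on [A] or onto [B]. *)
Lemma injects_total T U (A : set T) (B : set U) : injects A B \/ injects B A.
Proof.
pose P (G : set (T * U)) := G `<=` A `*` B /\
  (forall p q, G p -> G q -> p.1 = q.1 -> p = q) /\
  (forall p q, G p -> G q -> p.2 = q.2 -> p = q).
have [M [[MAB [M1 M2]] Mmax]] : exists M, P M /\ forall N, M `<` N -> ~ P N.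
  apply: Zorn_bigcup => F FP Ftot; split; [|split].
  - by move=> p [X /FP [h _] Xp]; exact: h.
  - move=> p q [X FX Xp] [Y FY Yq].
    have [XY|YX] := Ftot _ _ FX FY.
      by have [_ [h _]] := FP _ FY; apply: h => //; exact: XY.
    by have [_ [h _]] := FP _ FX; apply: h => //; exact: YX.
  - move=> p q [X FX Xp] [Y FY Yq].
    have [XY|YX] := Ftot _ _ FX FY.
      by have [_ [_ h]] := FP _ FY; apply: h => //; exact: XY.
    by have [_ [_ h]] := FP _ FX; apply: h => //; exact: YX.
have [totA|ntotA] := pselect (forall x, A x -> exists y, M (x, y)).
  by left; apply: (graph_injects MAB).
have [totB|ntotB] := pselect (forall y, B y -> exists x, M (x, y)).
  right; apply: (@graph_injects _ _ B A [set p | M (p.2, p.1)]).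
  - by move=> [y x] /MAB [].
  - move=> [y x] [y' x'] /= h1 h2 e; subst x'.
    by have := M1 _ _ h1 h2 erefl => -[->].
  - by move=> y /totB [x Mx]; exists x.
have [a [Aa na]] : exists a, A a /\ forall y, ~ M (a, y).
  apply: contrapT => h; apply: ntotA => x Ax; apply: contrapT => h2; apply: h.
  by exists x; split => // y My; apply: h2; exists y.
have [b [Bb nb]] : exists b, B b /\ forall x, ~ M (x, b).
  apply: contrapT => h; apply: ntotB => y By; apply: contrapT => h2; apply: h.
  by exists y; split => // x Mx; apply: h2; exists x.
exfalso; apply: (Mmax (M `|` [set (a, b)])).
  split; first by move=> p Mp; left.
  by move=> /(_ (a, b) (or_intror erefl)); apply: na.
split; [|split].
- by move=> p [/MAB //|->].
- move=> [x y] [x' y'] [Mp|[-> ->]] [Mq|[-> ->]] //=.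
  + exact: (M1 (x, y) (x', y')).
  + by move=> ex; subst x; case: (na y).
  + by move=> ex; subst x'; case: (na y').
- move=> [x y] [x' y'] [Mp|[-> ->]] [Mq|[-> ->]] //=.
  + exact: (M2 (x, y) (x', y')).
  + by move=> ey; subst y; case: (nb x).
  + by move=> ey; subst y'; case: (nb x').
Qed.

Lemma infinite_distinct2 T (A : set T) : infinite_set A ->
  exists a0 a1, A a0 /\ A a1 /\ a0 <> a1.
Proof.
move=> /infinite_injects [/seteqP [/(_ 0%N I) //]|[f [fA finj]]].
exists (f 0%N), (f 1%N); split; first exact: fA.
split; first exact: fA.
by move=> /finj => /(_ I I).
Qed.

Lemma injects_setU T U (X Y : set T) (R : set U) : infinite_set R ->
  injects (R `*` R) R -> injects X R -> injects Y R -> injects (X `|` Y) R.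
Proof.
move=> Rinf RR XR YR; have [r0 [r1 [R0 [R1 r01]]]] := infinite_distinct2 Rinf.
have [f [fR fi]] := injects_fun r0 XR.
have [g [gR gi]] := injects_fun r0 YR.
apply: injects_trans RR; right.
exists (fun x => if `[< X x >] then (r0, f x) else (r1, g x)); split.
  move=> x XYx; case: ifPn => [/asboolP Xx|/asboolP nXx].
    by split => //=; apply: fR.
  by split => //=; apply: gR; case: XYx.
move=> x y XYx XYy.
case: ifPn => [/asboolP Xx|/asboolP nXx]; case: ifPn => [/asboolP Xy|/asboolP nXy].
- by case=> /fi; apply.
- by case=> e; case: r01.
- by case=> e; case: r01.
- have Yx : Y x by case: XYx.
  have Yy : Y y by case: XYy.
  by case=> /gi; apply.
Qed.

Lemma chain_bigcup2 T (F : set (set T)) (x y : T) : total_on F subset ->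
  (\bigcup_(X in F) X) x -> (\bigcup_(X in F) X) y ->
  exists2 Z, F Z & Z x /\ Z y.
Proof.
move=> Ftot [X FX Xx] [Y FY Yy].
have [XY|YX] := Ftot _ _ FX FY; first by exists Y => //; split => //; apply: XY.
by exists X => //; split => //; apply: YX.
Qed.

(** * Hessenberg's theorem: [A * A] injects into an infinite [A] *)

(* A pairing graph on [A] is the graph of a bijection [R * R -> R] for some
   infinite [R] included in [A]. *)
Definition pairing_range T (G : set ((T * T) * T)) := [set z | exists p, G (p, z)].

Definition pairing_graph T (A : set T) (G : set ((T * T) * T)) :=
  (forall a b, G a -> G b -> a.1 = b.1 -> a = b) /\
  (forall a b, G a -> G b -> a.2 = b.2 -> a = b) /\
  (forall p, (exists z, G (p, z)) <->
             (pairing_range G p.1 /\ pairing_range G p.2)) /\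
  pairing_range G `<=` A /\ infinite_set (pairing_range G).

Lemma pairing_graph_square T (A : set T) G : pairing_graph A G ->
  injects (pairing_range G `*` pairing_range G) (pairing_range G).
Proof.
move=> [G1 [G2 [Gdom _]]]; apply: (@graph_injects _ _ _ _ G) => //.
- by move=> [p z] Gpz; split; [apply/Gdom; exists z|exists p].
- by move=> p /Gdom [z Gz]; exists z.
Qed.

Lemma pairing_graph_bigcup T (A : set T) (F : set (set ((T * T) * T))) X0 :
  (forall Z, F Z -> pairing_graph A Z) -> total_on F subset -> F X0 ->
  pairing_graph A (\bigcup_(X in F) X).
Proof.
move=> FP Ftot FX0.
have rangeU z : pairing_range (\bigcup_(X in F) X) z <->
    exists2 X, F X & pairing_range X z.
  split; first by move=> [p [X FX Xp]]; exists X => //; exists p.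
  by move=> [X FX [p Xp]]; exists p; exists X.
split; [|split; [|split; [|split]]].
- move=> a b Ua Ub; have [Z FZ [Za Zb]] := chain_bigcup2 Ftot Ua Ub.
  by have [h _] := FP _ FZ; apply: h.
- move=> a b Ua Ub; have [Z FZ [Za Zb]] := chain_bigcup2 Ftot Ua Ub.
  by have [_ [h _]] := FP _ FZ; apply: h.
- move=> p; split.
    move=> [z [X FX Xp]]; have [_ [_ [Xdom _]]] := FP _ FX.
    have [] := (proj1 (Xdom p)) (ex_intro _ z Xp).
    by split; apply/rangeU; exists X.
  move=> [/rangeU [X FX [q Xq]] /rangeU [Y FY [q' Yq']]].
  have [Z FZ [Zq Zq']] :=
    chain_bigcup2 Ftot (ex_intro2 _ _ X FX Xq) (ex_intro2 _ _ Y FY Yq').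
  have [_ [_ [Zdom _]]] := FP _ FZ.
  have [z Zz] := (proj2 (Zdom p)) (conj (ex_intro _ q Zq) (ex_intro _ q' Zq')).
  by exists z; exists Z.
- by move=> z /rangeU [X FX Xz]; have [_ [_ [_ [h _]]]] := FP _ FX; apply: h.
- have [_ [_ [_ [_ X0inf]]]] := FP _ FX0.
  by apply: (sub_infinite_set _ X0inf) => z X0z; apply/rangeU; exists X0.
Qed.

(* Transport the bijection [nat * nat -> nat] along an injection [nat -> A]. *)
Lemma pairing_graph_nat T (A : set T) : infinite_set A ->
  exists G, G !=set0 /\ pairing_graph A G.
Proof.
move=> /infinite_injects [/seteqP [/(_ 0%N I) //]|[e [eA einj]]].
have [pi [_ pinj psurj]] : exists pi : nat * nat -> nat, set_bij setT setT pi.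
  exact/card_set_bijP/card_nat2.
have {}pinj a b : pi a = pi b -> a = b by apply: pinj; rewrite inE.
have {}einj a b : e a = e b -> a = b by apply: einj.
pose G := [set g | exists ij : nat * nat, g = ((e ij.1, e ij.2), e (pi ij))].
have rangeG z : pairing_range G z <-> exists n, z = e n.
  split; first by move=> [p [ij [_ ->]]]; exists (pi ij).
  move=> [n ->]; have [ij _ pij] := psurj n I.
  by exists (e ij.1, e ij.2); exists ij; rewrite pij.
exists G; split; first by exists (e 0%N, e 0%N, e (pi (0%N, 0%N))); exists (0%N, 0%N).
split; [|split; [|split; [|split]]].
- by move=> a b [[i j] ->] [[i' j'] ->] /= [/einj -> /einj ->].
- by move=> a b [ij ->] [ij' ->] /= /einj /pinj ->.
- move=> [x y]; split.
    move=> [z [ij [-> -> _]]].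
    by split; apply/rangeG; [exists ij.1|exists ij.2].
  move=> [] /= /rangeG [n ->] /rangeG [m ->].
  by exists (e (pi (n, m))); exists (n, m).
- by move=> z /rangeG [n ->]; apply: eA.
- apply/infinite_injects; right; exists e; split; last by move=> x y _ _ /einj.
  by move=> n _; apply/rangeG; exists n.
Qed.

Lemma pairing_graph_maximal T (A : set T) : infinite_set A ->
  exists M, pairing_graph A M /\ forall N, M `<` N -> ~ pairing_graph A N.
Proof.
move=> Ainf; pose P G := G = set0 \/ pairing_graph A G.
have [M [PM Mmax]] : exists M, P M /\ forall N, M `<` N -> ~ P N.
  apply: Zorn_bigcup => F FP Ftot.
  have [[X0 FX0 X0n0]|] := pselect (exists2 X, F X & X !=set0); last first.
    move=> F0; left; apply/seteqP; split => // p [X FX Xp].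
    by apply: F0; exists X => //; exists p.
  right; have -> : \bigcup_(X in F) X = \bigcup_(X in F `&` [set Z | Z !=set0]) X.
    apply/seteqP; split => p [X FX Xp]; exists X => //; last by case: FX.
    by split => //; exists p.
  apply: (@pairing_graph_bigcup _ _ _ X0) => //.
  - by move=> Z [/FP [->|//] [z []]].
  - by move=> X Y [FX _] [FY _]; apply: Ftot.
have [G0 [G0n0 G0P]] := pairing_graph_nat Ainf.
case: PM => [M0|MP]; last by exists M; split => // N /Mmax + NP; apply; right.
exfalso; apply: (Mmax G0); last by right.
rewrite M0; split => // G0sub; have [g G0g] := G0n0; exact: (G0sub g G0g).
Qed.

Definition fresh_pairs T (R C : set T) :=
  [set p : T * T | (R `|` C) p.1 /\ (R `|` C) p.2 /\ ~ (R p.1 /\ R p.2)].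

Lemma pairing_graph_adjoin T (A C : set T) M (k : T * T -> T) :
  let D := fresh_pairs (pairing_range M) C in
  pairing_graph A M -> C `<=` A -> (forall c, C c -> ~ pairing_range M c) ->
  (forall p, D p -> C (k p)) -> (forall p q, D p -> D q -> k p = k q -> p = q) ->
  (forall c, C c -> exists2 p, D p & k p = c) ->
  pairing_graph A (M `|` [set g | D g.1 /\ g.2 = k g.1]).
Proof.
set R := pairing_range M => D MP CA CnR kD kinj ksurj.
have [M1 [M2 [Mdom [RA Rinf]]]] := MP.
set N := _ `|` _.
have rangeN z : pairing_range N z <-> R z \/ C z.
  split; first by move=> [p [Mp|[Dp /= ->]]]; [left; exists p|right; exact: kD].
  case=> [[p Mp]|Cz]; first by exists p; left.
  by have [p Dp kp] := ksurj z Cz; exists p; right.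
have MR p z : M (p, z) -> R p.1 /\ R p.2 by move=> Mpz; apply/Mdom; exists z.
split; [|split; [|split; [|split]]].
- move=> [p z] [p' z'] [Ma|[Da /= ->]] [Mb|[Db /= ->]] /= epp.
  + exact: (M1 (p, z) (p', z')).
  + by subst p'; case: Db => _ [_]; case; exact: MR Ma.
  + by subst p'; case: Da => _ [_]; case; exact: MR Mb.
  + by subst p'.
- move=> [p z] [p' z'] [Ma|[Da /= ->]] [Mb|[Db /= ->]] /= ezz.
  + exact: (M2 (p, z) (p', z')).
  + by case: (CnR z); [rewrite ezz; exact: kD|exists p].
  + by case: (CnR z'); [rewrite -ezz; exact: kD|exists p'].
  + by move: (kinj _ _ Da Db ezz) => /= ->.
- move=> p; split.
    move=> [z [/MR [? ?]|[[? [? _]] _]]].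
      by split; apply/rangeN; left.
    by split; apply/rangeN.
  move=> [/rangeN Rp1 /rangeN Rp2].
  have [RRp|nRRp] := pselect (R p.1 /\ R p.2).
    by have [z Mz] := (proj2 (Mdom p)) RRp; exists z; left.
  by exists (k p); right.
- by move=> z /rangeN [/RA|/CA].
- by apply: (sub_infinite_set _ Rinf) => z Rz; apply/rangeN; left.
Qed.

(* A set [C] disjoint from the range [R] and of size [|R|] has room for the
   fresh pairs: [|(R + C)^2 - R^2| = |R| = |C|]. *)
Lemma pairing_graph_extend T (A : set T) M (C : set T) :
  pairing_graph A M -> C `<=` A -> (forall c, C c -> ~ pairing_range M c) ->
  C !=set0 -> injects (pairing_range M) C -> injects C (pairing_range M) ->
  exists N, M `<` N /\ pairing_graph A N.
Proof.
set R := pairing_range M => MP CA CnR [c0 Cc0] RC CR.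
have [_ [_ [_ [_ Rinf]]]] := MP.
have RR : injects (R `*` R) R := pairing_graph_square MP.
set D := fresh_pairs R C.
have DC : injects D C.
  have RCR : injects (R `|` C) R := injects_setU Rinf RR (injects_refl R) CR.
  apply: injects_trans (injects_sub (A := D) (B := (R `|` C) `*` (R `|` C)) _) _.
    by move=> p [? [? _]]; split.
  apply: injects_trans (injects_setX RCR RCR) _; exact: injects_trans RR RC.
have Ddiag c : C c -> D (c, c) by move=> Cc; do 2?split; [right|right|case=> /CnR].
have CD : injects C D.
  by right; exists (fun c => (c, c)); split => [c /Ddiag //|x y _ _ []].
have [k [kD [kinj ksurj]]] := injects_bij c0 DC CD.
exists (M `|` [set g | D g.1 /\ g.2 = k g.1]); split; last first.
  exact: pairing_graph_adjoin.
split; first by move=> g Mg; left.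
move=> /(_ ((c0, c0), k (c0, c0))) NM.
have /NM Mk : (M `|` [set g | D g.1 /\ g.2 = k g.1]) ((c0, c0), k (c0, c0)).
  by right; split => //; exact: Ddiag.
by apply: (CnR (k (c0, c0))); [exact/kD/Ddiag|exists (c0, c0)].
Qed.

(* In a maximal pairing graph with range [R], [A] injects into [R]: otherwise
   [R] injects into [A `\` R] and the graph could be extended. *)
Lemma injects_square T (A : set T) : infinite_set A -> injects (A `*` A) A.
Proof.
move=> Ainf; have [M [MP Mmax]] := pairing_graph_maximal Ainf.
have [_ [_ [_ [RA Rinf]]]] := MP; set R := pairing_range M in RA Rinf *.
have RR : injects (R `*` R) R := pairing_graph_square MP.
suff AR : injects A R.
  apply: injects_trans (injects_setX AR AR) _.
  exact: injects_trans RR (injects_sub RA).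
have [DR|RD] := injects_total (A `\` R) R.
  apply: injects_trans (injects_setU Rinf RR DR (injects_refl R)).
  by apply: injects_sub => x Ax; have [Rx|nRx] := pselect (R x); [right|left].
have [r0 Rr0] := infinite_setN0 Rinf.
have [h [hD hinj]] := injects_fun r0 RD.
have CA : h @` R `<=` A by move=> _ [r Rr <-]; case: (hD r Rr).
have CnR c : (h @` R) c -> ~ R c by move=> [r Rr <-]; case: (hD r Rr).
have RC : injects R (h @` R) by right; exists h; split => // r Rr; exists r.
have [N [MN NP]] := pairing_graph_extend MP CA CnR
  (ex_intro _ (h r0) (ex_intro2 _ _ r0 Rr0 erefl)) RC (injects_image h R).
by case: (Mmax N MN NP).
Qed.

Lemma injects_bigcup I T U (D : set I) (B : I -> set T) (C : set U) :
  infinite_set C -> injects D C -> (forall i, D i -> injects (B i) C) ->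
  injects (\bigcup_(i in D) B i) C.
Proof.
move=> Cinf DC BC; have [c0 Cc0] := infinite_setN0 Cinf.
have [f [fC finj]] := injects_fun c0 DC.
have /choice [e he] : forall i, exists e : T -> U, D i ->
    (forall x, B i x -> C (e x)) /\
    (forall x y, B i x -> B i y -> e x = e y -> x = y).
  move=> i; have [Di|nDi] := pselect (D i); last by exists (fun _ => c0).
  by have [e ?] := injects_fun c0 (BC i Di); exists e.
have [->|/set0P [x0 [i0 _ _]]] := eqVneq (\bigcup_(i in D) B i) set0.
  by left.
have /choice [ix hix] : forall x, exists i,
    (\bigcup_(i in D) B i) x -> D i /\ B i x.
  move=> x; have [[i Di Bix]|nx] := pselect ((\bigcup_(i in D) B i) x).
    by exists i.
  by exists i0.
apply: injects_trans (injects_square Cinf); right.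
exists (fun x => (f (ix x), e (ix x) x)); split.
  move=> x Ux; have [Dix Bx] := hix x Ux; split; first exact: fC.
  by have [+ _] := he _ Dix; apply.
move=> x y Ux Uy [fxy exy]; have [Dx Bx] := hix x Ux; have [Dy By] := hix y Uy.
rewrite -(finj _ _ Dx Dy fxy) in By exy.
by have [_] := he _ Dx; apply.
Qed.

Lemma injects_Forall T U (A : set T) (B : set U) :
  injects A B -> injects (List.Forall A) (List.Forall B).
Proof.
case=> [A0|[f [fB finj]]].
  have nil l : List.Forall A l -> l = [::].
    by case: l => // x l /List.Forall_cons_iff []; rewrite A0.
  right; exists (fun _ => [::]); split => [_ _|l l' /nil -> /nil -> //].
  exact: List.Forall_nil.
right; exists (map f); split.
  by move=> l Al; apply/List.Forall_map; apply: List.Forall_impl Al.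
elim=> [|x l IH] [|y l'] //; try by move=> _ _ [].
move=> /List.Forall_cons_iff [Ax Al] /List.Forall_cons_iff [Ay Al'] [fxy fll'].
by rewrite (finj _ _ Ax Ay fxy) (IH _ Al Al' fll').
Qed.

Lemma injects_seq T (A : set T) : infinite_set A -> injects (List.Forall A) A.
Proof.
move=> Ainf; have [a0 Aa0] := infinite_setN0 Ainf.
have -> : List.Forall A =
    \bigcup_(n in [set: nat]) [set l | List.Forall A l /\ size l = n].
  by apply/seteqP; split => l; [exists (size l)|move=> [n _ []]].
apply: injects_bigcup => //; first exact/infinite_injects.
elim=> [|n IH] _.
  right; exists (fun _ => a0).
  by split => // l l' [_ /size0nil ->] [_ /size0nil ->].
apply: injects_trans (injects_square Ainf).
apply: injects_trans (injects_setX (injects_refl A) (IH I)); right.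
exists (fun l => (head a0 l, behead l)); split.
  move=> [|x l] [Axl sl] //.
  by move: Axl sl => /List.Forall_cons_iff [Ax Al] [sl].
by move=> [|x l] [|y l'] [_ sl] [_ sl'] // [-> ->].
Qed.

(* Words over [B], the boolean being the sign of the exponent. *)
Definition words T (B : set T) : set (seq (T * bool)) :=
  List.Forall (B `*` [set: bool]).

Lemma injects_words_mono T U (A : set T) (B : set U) :
  injects A B -> injects (words A) (words B).
Proof. by move=> AB; apply/injects_Forall/injects_setX => //; exact: injects_refl. Qed.

Lemma injects_words T (B : set T) : infinite_set B -> injects (words B) B.
Proof.
move=> Binf; apply: injects_trans (injects_seq Binf).
apply: injects_trans (injects_Forall (injects_square Binf)).
apply/injects_Forall/injects_setX; first exact: injects_refl.
exact/finite_injects/finite_finset.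
Qed.

(** * A subfamily of size exactly the successor cardinal *)

Section WellOrder.
Variables (X : eqType) (R : rel X).
Hypothesis R_wo : well_order R.

Lemma wo_chainT : wo_chain R predT. Proof. by move=> A _; exact: R_wo. Qed.

Lemma wo_min (P : X -> Prop) : (exists x, P x) ->
  exists z, P z /\ forall x, P x -> R z x.
Proof.
move=> [x Px].
have [z [[Pz zmin] _]] := @R_wo [pred y | `[< P y >]] (ex_intro _ x (asboolT Px)).
by exists z; split => [|y Py]; [exact/asboolP|apply: zmin; exact/asboolP].
Qed.

Definition strict_segment (F : set X) w := [set x | F x /\ R x w /\ x <> w].

(* [T] is cofinal in [F], so the segments below elements of [T] cover [F]. *)
Lemma segments_injects_minimal Y (F : set X) (B : set Y) (T : set X) :
  infinite_set B -> (forall w, F w -> injects (strict_segment F w) B) ->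
  T `<=` F -> ~ injects T B -> injects F T.
Proof.
move=> Binf segB TF nTB.
have BT : injects B T by case: (injects_total T B).
have Tinf : infinite_set T by move=> /(finite_injects Binf).
have cover : F `<=` \bigcup_(t in T) [set x | F x /\ R x t].
  move=> x Fx; apply: contrapT => nx; apply: nTB.
  apply: injects_trans (segB x Fx); apply: injects_sub => t Tt.
  have nRxt : ~ R x t by move=> Rxt; apply: nx; exists t.
  split; first exact: TF.
  have /orP [//|Rtx] : R x t || R t x := wo_chainW wo_chainT isT isT.
  split => // etx; apply: nRxt; rewrite -etx.
  exact: (wo_chain_reflexive wo_chainT (x:=t)).
apply: injects_trans (injects_sub cover) _.
apply: injects_bigcup => //; first exact: injects_refl.
move=> t Tt; apply: injects_trans BT.
have sub : [set x | F x /\ R x t] `<=` strict_segment F t `|` [set t].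
  by move=> x [Fx Rxt]; have [->|xt] := pselect (x = t); [right|left].
apply: injects_trans (injects_sub sub) _.
apply: injects_setU => //; [exact: injects_square|exact: segB (TF t Tt)|].
exact: finite_injects Binf (finite_set1 t).
Qed.

End WellOrder.

(* Take [F] itself, or else its shortest initial segment not injecting into [B]. *)
Lemma succ_card_subset (X : eqType) Y (F : set X) (B : set Y) :
  infinite_set B -> ~ injects F B ->
  exists2 F', F' `<=` F &
    ~ injects F' B /\ forall T, T `<=` F' -> ~ injects T B -> injects F' T.
Proof.
move=> Binf nFB; have [R R_wo] := well_ordering_principle X.
have [[w Fw]|small] :=
    pselect (exists w, F w /\ ~ injects (strict_segment R F w) B); last first.
  exists F => //; split => // T TF nTB.
  apply: (segments_injects_minimal R_wo Binf _ TF nTB) => w Fw.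
  by apply: contrapT => nwB; apply: small; exists w.
have [w0 [[Fw0 nw0B] w0min]] :=
  @wo_min _ _ R_wo (fun w => F w /\ ~ injects (strict_segment R F w) B)
    (ex_intro _ w Fw).
exists (strict_segment R F w0); first by move=> x [].
split => // T TF nTB; apply: (segments_injects_minimal R_wo Binf _ TF nTB).
move=> x [Fx [Rxw0 xw0]].
have xB : injects (strict_segment R F x) B.
  apply: contrapT => nxB; apply: xw0.
  apply: (wo_chain_antisymmetric (wo_chainT R_wo)) => //.
  by rewrite Rxw0 w0min.
apply: injects_trans xB; apply: injects_sub => y [[Fy _] [Ryx yx]]; by split.
Qed.

(** * Words in a product of groups *)

Section TopGroupTheory.
Variables (T : topologicalType) (g : topGroup T).
Local Notation mul := (tg_mul g).
Local Notation inv := (tg_inv g).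
Local Notation one := (tg_one g).

Lemma tg_inv_uniq x y : mul x y = one -> y = inv x.
Proof. by move=> xy; rewrite -(tg_mul1g g y) -(tg_mulVg g x) -tg_mulA xy tg_mulg1. Qed.

Lemma tg_invM x y : inv (mul x y) = mul (inv y) (inv x).
Proof.
apply/esym/tg_inv_uniq.
by rewrite -tg_mulA (tg_mulA g y) tg_mulgV tg_mul1g tg_mulgV.
Qed.

Lemma tg_invK x : inv (inv x) = x.
Proof. by apply/esym/tg_inv_uniq; rewrite tg_mulVg. Qed.

Lemma tg_inv1 : inv one = one.
Proof. by apply/esym/tg_inv_uniq; rewrite tg_mul1g. Qed.

End TopGroupTheory.

Section Words.
Variables (K : Type) (G : K -> topologicalType) (tg : forall k, topGroup (G k)).
Variable a : forall k, G k.

(* [letter (X, true)] is [e_X] and [letter (X, false)] its inverse. *)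
Definition letter (p : set K * bool) : prod_topology G := fun k =>
  if `[< p.1 k >] then (if p.2 then a k else tg_inv (tg k) (a k))
  else tg_one (tg k).

Definition word_val (l : seq (set K * bool)) : prod_topology G :=
  foldr (fun p w => prod_mul tg (letter p) w) (prod_one tg) l.

Definition word_inv (l : seq (set K * bool)) :=
  List.rev (map (fun p => (p.1, ~~ p.2)) l).

Definition word_trace (A : set K) (l : seq (set K * bool)) :=
  map (fun p => (p.1 `&` A, p.2)) l.

Lemma word_val_cat l1 l2 : word_val (l1 ++ l2) = prod_mul tg (word_val l1) (word_val l2).
Proof.
elim: l1 => [|p l1 IH] /=; apply: functional_extensionality_dep => k.
  by rewrite /prod_mul /prod_one tg_mul1g.
by rewrite IH /prod_mul tg_mulA.
Qed.

Lemma letter_inv p : letter (p.1, ~~ p.2) = prod_inv tg (letter p).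
Proof.
apply: functional_extensionality_dep => k; rewrite /letter /prod_inv /=.
case: ifP => _; last by rewrite tg_inv1.
by case: p.2 => //=; rewrite tg_invK.
Qed.

Lemma word_val_inv l : word_val (word_inv l) = prod_inv tg (word_val l).
Proof.
elim: l => [|p l IH].
  by apply: functional_extensionality_dep => k; rewrite /prod_inv /= tg_inv1.
rewrite /word_inv /= -/(word_inv l).
have -> : forall l1 l2, (l1 ++ l2)%list = l1 ++ l2 by [].
rewrite word_val_cat IH /= letter_inv; apply: functional_extensionality_dep => k.
by rewrite /prod_mul /prod_inv /prod_one /= tg_mulg1 tg_invM.
Qed.

Lemma word_val_trace (A : set K) l k : A k -> word_val (word_trace A l) k = word_val l k.
Proof.
move=> Ak; elim: l => [|p l IH] //=; rewrite /prod_mul IH /letter /=.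
suff -> : `[< (p.1 `&` A) k >] = `[< p.1 k >] by [].
by apply/asboolP/asboolP => [[]|].
Qed.

Lemma word_val_agree (A : set K) l l' : word_trace A l = word_trace A l' ->
  forall k, A k -> word_val l k = word_val l' k.
Proof. by move=> e k Ak; rewrite -(word_val_trace l Ak) e word_val_trace. Qed.

Lemma words_inv (B : set (set K)) l : words B l -> words B (word_inv l).
Proof.
move=> Bl; apply/List.Forall_rev/List.Forall_map.
by apply: List.Forall_impl Bl => -[X b] [].
Qed.

Definition word_span (F : set (set K)) := word_val @` words F.

Lemma word_span_subgroup F : prod_is_subgroup tg (word_span F).
Proof.
split; [|split].
- by exists [::] => //; exact: List.Forall_nil.
- move=> _ _ [l1 Fl1 <-] [l2 Fl2 <-]; exists (l1 ++ l2); last exact: word_val_cat.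
  exact/List.Forall_app.
- move=> _ [l Fl <-]; exists (word_inv l); first exact: words_inv.
  exact: word_val_inv.
Qed.

End Words.

(** * Rothberger boundedness and cardinality of the span *)

Lemma countable_setU T (A B : set T) : countable A -> countable B -> countable (A `|` B).
Proof.
have Ninf : infinite_set [set: nat] by apply/infinite_injects/injects_refl.
move=> /injects_card_le A0 /injects_card_le B0; apply/injects_card_le.
exact: injects_setU Ninf (injects_square Ninf) A0 B0.
Qed.

Section CountableSupport.
Variables (K : Type) (G : K -> topologicalType) (x : prod_topology G).

Definition agree_countably : set_system (prod_topology G) :=
  [set U | exists J : set K, countable J /\
     forall f : prod_topology G, (forall j, J j -> f j = x j) -> U f].

Lemma agree_countably_filter : Filter agree_countably.
Proof.
constructor.
- by exists set0; split => //; exact: countable0.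
- move=> P Q [J1 [J1c J1P]] [J2 [J2c J2Q]]; exists (J1 `|` J2).
  split; first exact: countable_setU.
  by move=> f fx; split; [apply: J1P|apply: J2Q] => j Jj; apply: fx; [left|right].
- by move=> P Q PQ [J [Jc JP]]; exists J; split => // f /JP /PQ.
Qed.

(* A subbasic neighbourhood of [x] constrains a single coordinate. *)
Lemma agree_countably_cvg : agree_countably --> x.
Proof.
have := @cvg_sup (forall i, G i) K
  (fun i => Topological.class (initial_topology (fun f : (forall i, G i) => f i)))
  agree_countably x agree_countably_filter.
move=> [_]; apply => i U; rewrite nbhsE /= => -[B [[V oV <-] /= Vx] BU].
exists [set i]; split; first exact: countable1.
by move=> f fx; apply: BU => /=; rewrite fx.
Qed.

Lemma open_countable_support (U : set (prod_topology G)) :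
  open U -> U x -> agree_countably U.
Proof. by move=> Uo Ux; apply/agree_countably_cvg/open_nbhs_nbhs. Qed.

End CountableSupport.

Lemma word_traces_countable K (F F' : set (set K)) (A : set K) :
  F' `<=` F ->
  (forall A, infinite_set A -> countable A -> card_le [set X `&` A | X in F] A) ->
  infinite_set A -> countable A -> countable (word_trace A @` words F').
Proof.
move=> F'F KH Ainf Ac.
have Ninf : infinite_set [set: nat] by apply/infinite_injects/injects_refl.
have traces_nat : injects [set X `&` A | X in F] [set: nat].
  by apply/injects_card_le; exact: card_le_trans (KH A Ainf Ac) Ac.
apply/injects_card_le; apply: injects_trans (injects_words Ninf).
apply: injects_trans (injects_words_mono traces_nat).
apply: injects_sub => _ [l F'l <-].
apply/List.Forall_map; apply: List.Forall_impl F'l => -[X b] [/= F'X _].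
by split => //; exists X => //; apply: F'F.
Qed.

Lemma word_span_rothberger K (G : K -> topologicalType)
    (tg : forall k, topGroup (G k)) (a : forall k, G k) (F F' : set (set K)) :
  infinite_set [set: K] -> F' `<=` F ->
  (forall A, infinite_set A -> countable A -> card_le [set X `&` A | X in F] A) ->
  prod_rothberger_bounded tg (word_span tg a F').
Proof.
move=> Kinf F'F KH U U1.
have /choice [J JU] : forall n, exists J : set K, countable J /\
    forall f, (forall j, J j -> f j = prod_one tg j) -> U n f.
  by move=> n; have [Uo U1n] := U1 n; exact: open_countable_support.
have /infinite_injects [/seteqP [/(_ 0%N I) //]|[e [_ einj]]] := Kinf.
pose A := e @` [set: nat] `|` \bigcup_(n in [set: nat]) J n.
have Ac : countable A.
  apply: countable_setU; first exact/injects_card_le/injects_image.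
  by apply: bigcup_countable => // n _; case: (JU n).
have Ainf : infinite_set A.
  apply/infinite_injects; right; exists e.
  by split => [n _|m n _ _ /einj]; [left; exists n|apply].
have /injects_card_le/(injects_fun 0%N) [c [_ cinj]] :=
  word_traces_countable F'F KH Ainf Ac.
have /choice [w wP] : forall n, exists l,
    (exists2 l', words F' l' & c (word_trace A l') = n) ->
    words F' l /\ c (word_trace A l) = n.
  move=> n; have [[l F'l cl]|nn] := pselect
    (exists2 l', words F' l' & c (word_trace A l') = n); last by exists [::].
  by exists l.
exists (fun n => word_val tg a (w n)) => _ [l F'l <-].
set n := c (word_trace A l); have [F'wn cwn] := wP n (ex_intro2 _ _ l F'l erefl).
have traces : word_trace A (w n) = word_trace A l.
  by apply: cinj => //.
exists n => //; exists (prod_mul tg (prod_inv tg (word_val tg a (w n))) (word_val tg a l)).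
  have [_] := JU n; apply => j Jnj.
  rewrite /prod_mul /prod_inv /prod_one (word_val_agree _ _ traces); last first.
    by right; exists n.
  exact: tg_mulVg.
apply: functional_extensionality_dep => k.
by rewrite /prod_mul /prod_inv tg_mulA tg_mulgV tg_mul1g.
Qed.

Lemma finite_letters T (l : seq (T * bool)) :
  finite_set [set X | exists b, List.In (X, b) l].
Proof.
elim: l => [|[X b] l IH].
  by apply: sub_finite_set (finite_set0 T) => ? [].
apply: sub_finite_set (_ : _ `<=` [set X] `|` _) _; last first.
  by rewrite finite_setU; split; [exact: finite_set1|exact: IH].
by move=> Y [b' [[-> _]|Yl]]; [left|right; exists b'].
Qed.

Lemma image_words_support T Z (f : seq (T * bool) -> Z) (B : set T) (S : set Z) :
  S `<=` f @` words B -> exists2 L, L `<=` B &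
    injects S (words L) /\ (infinite_set S -> injects L S).
Proof.
move=> SB.
have /choice [w wP] : forall s, exists l, S s -> words B l /\ f l = s.
  move=> s; have [/SB [l Bl fl]|nSs] := pselect (S s); last by exists [::].
  by exists l.
exists (\bigcup_(s in S) [set X | exists b, List.In (X, b) (w s)]).
  move=> X [s Ss [b Xb]]; have [/List.Forall_forall Bws _] := wP s Ss.
  by have [] := Bws _ Xb.
split.
  right; exists w; split => [s Ss|s s' Ss Ss' ws].
    by apply/List.Forall_forall => -[X b] Xb; split => //; exists s => //; exists b.
  by rewrite -(wP s Ss).2 -(wP s' Ss').2 ws.
move=> Sinf; apply: injects_bigcup => //; first exact: injects_refl.
by move=> s _; apply: finite_injects Sinf (finite_letters _).
Qed.

Lemma word_val1 K (G : K -> topologicalType) (tg : forall k, topGroup (G k))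
    (a : forall k, G k) p : word_val tg a [:: p] = letter tg a p.
Proof.
by apply: functional_extensionality_dep => k; rewrite /= /prod_mul /prod_one tg_mulg1.
Qed.

Lemma letter_inj K (G : K -> topologicalType) (tg : forall k, topGroup (G k))
    (a : forall k, G k) :
  (forall k, a k <> tg_one (tg k)) -> injective (fun X => letter tg a (X, true)).
Proof.
move=> a1 X Y XY; apply/seteqP; split => k Xk; apply: contrapT => nk;
  have := congr1 (fun h => h k) XY; rewrite /letter /=.
  by rewrite (asboolT Xk) (asboolF nk); exact: a1.
by rewrite (asboolT Xk) (asboolF nk) => /esym; exact: a1.
Qed.

Lemma word_span_card_succ K (G : K -> topologicalType)
    (tg : forall k, topGroup (G k)) (a : forall k, G k) (F : set (set K)) :
  infinite_set [set: K] -> (forall k, a k <> tg_one (tg k)) ->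
  ~ injects F [set: K] ->
  (forall T, T `<=` F -> ~ injects T [set: K] -> injects F T) ->
  has_card_succ K (word_span tg a F).
Proof.
move=> Kinf a1 nFK Fmin.
have Finf : infinite_set F by move=> /(finite_injects Kinf).
have FS : injects F (word_span tg a F).
  right; exists (fun X => word_val tg a [:: (X, true)]); split.
    by move=> X FX; exists [:: (X, true)] => //; do 2!constructor.
  by move=> X Y _ _; rewrite !word_val1 => /letter_inj; apply.
have SF : injects (word_span tg a F) F.
  exact: injects_trans (injects_image _ _) (injects_words Finf).
split; first by move/injects_card_le => SK; apply: nFK; exact: injects_trans FS SK.
move=> T TS /injects_card_le nTK; apply/injects_card_le.
have Tinf : infinite_set T by move=> /(finite_injects Kinf).
have [L LF [TL LT]] := image_words_support TS.
apply: injects_trans SF (injects_trans (Fmin L LF _) (LT Tinf)) => LK.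
apply: nTK; apply: injects_trans TL _.
exact: injects_trans (injects_words_mono LK) (injects_words Kinf).
Qed.

Theorem theorem9 (K : Type) (G : K -> topologicalType)
    (tg : forall a : K, topGroup (G a)) :
  ~ countable [set: K] ->
  (forall a : K, exists x y : G a, x <> y) ->
  KH_aleph1 K ->
  exists S : set (prod_topology G),
    prod_is_subgroup tg S /\ prod_rothberger_bounded tg S /\ has_card_succ K S.
Proof.
move=> Kunc G2 [F [nFK KH]].
have Kinf : infinite_set [set: K] by move/finite_set_countable.
have nontrivial k : exists y : G k, y <> tg_one (tg k).
  have [x [y xy]] := G2 k.
  have [x1|] := pselect (x = tg_one (tg k)); last by exists x.
  by exists y; rewrite -x1 => /esym.
pose a k := projT1 (cid (nontrivial k)).
have a1 k : a k <> tg_one (tg k) := projT2 (cid (nontrivial k)).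
have [F' F'F [nF'K F'min]] :
    exists2 F', F' `<=` F & ~ injects F' [set: K] /\
      forall T, T `<=` F' -> ~ injects T [set: K] -> injects F' T.
  by apply: succ_card_subset Kinf _; rewrite -injects_card_le.
exists (word_span tg a F'); split; first exact: word_span_subgroup.
split; first exact: word_span_rothberger Kinf F'F KH.
exact: word_span_card_succ.
Qed.
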